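(* Let $N\ge3$ and $p>p_S$. For $\gamma>0$ let $y(t,\gamma):=A^{-1}e^{m\theta t}u(e^{mt},\gamma)$, $\tau(\gamma):=\frac{1}{m\theta}(\log\gamma-\log A)$ and $w(\xi,\gamma):=y(\xi-\tau(\gamma),\gamma)$. Let $\bar w$ be the solution of \[ w''+\alpha w'-w+w^p=0,\quad w>0,\quad e^{-m\theta\xi}w(\xi)\to1\ (\xi\to-\infty). \] Then for each fixed $\bar\xi\in\mathbb{R}$, $w(\cdot,\gamma)\to\bar w$ and $w'(\cdot,\gamma)\to\bar w'$ uniformly on $(-\infty,\bar\xi]$ as $\gamma\to\infty$.
   Context: $f(u):=-u+u^p$, $p_S:=\frac{N+2}{N-2}$, $\theta:=\frac{2}{p-1}$, $A:=\{\theta(N-2-\theta)\}^{1/(p-1)}$, $m:=\{\theta(N-2-\theta)\}^{-1/2}$, $\alpha:=m(N-2-2\theta)$. $u(s,\gamma)$ denotes the solution of $u''+\frac{N-1}{s}u'+f(u)=0$ ($s>0$), $u(0)=\gamma$, $u'(0)=0$, defined for all $s\ge0$. *)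

From Stdlib Require Import Reals Lra.
Open Scope R_scope.

(* Real power x^p for a real exponent p.  For x > 0 this is Rpower x p;
   we extend oddly (|x|^{p-1} x) to x <= 0 so that f is total.  On positive
   values (the relevant regime) this is exactly u^p. *)
Definition rpow (x p : R) : R :=
  if Rlt_dec 0 x then Rpower x p
  else if Rlt_dec x 0 then - Rpower (- x) p else 0.

Definition f (p u : R) : R := - u + rpow u p.

Definition pS (N : nat) : R := (INR N + 2) / (INR N - 2).
Definition theta (p : R) : R := 2 / (p - 1).
Definition Acst (N : nat) (p : R) : R :=
  Rpower (theta p * (INR N - 2 - theta p)) (1 / (p - 1)).
Definition mcst (N : nat) (p : R) : R :=
  / sqrt (theta p * (INR N - 2 - theta p)).
Definition alpha (N : nat) (p : R) : R :=
  mcst N p * (INR N - 2 - 2 * theta p).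

Definition is_radial_solution (N : nat) (p gamma : R) (u du : R -> R) : Prop :=
  u 0 = gamma /\
  (forall s, 0 < s -> derivable_pt_lim u s (du s)) /\
  (forall s, 0 < s ->
     derivable_pt_lim du s (- ((INR N - 1) / s) * du s - f p (u s))) /\
  (forall eps, 0 < eps -> exists delta, 0 < delta /\
     forall s, 0 < s < delta -> Rabs (u s - gamma) < eps) /\
  (forall eps, 0 < eps -> exists delta, 0 < delta /\
     forall s, 0 < s < delta -> Rabs (du s) < eps).

Definition yfun (N : nat) (p : R) (u : R -> R -> R) (t gamma : R) : R :=
  / Acst N p * exp (mcst N p * theta p * t) * u gamma (exp (mcst N p * t)).

Definition taufun (N : nat) (p gamma : R) : R :=
  (ln gamma - ln (Acst N p)) / (mcst N p * theta p).

Definition wfun (N : nat) (p : R) (u : R -> R -> R) (xi gamma : R) : R :=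
  yfun N p u (xi - taufun N p gamma) gamma.

From Pilot Require Import Defs.
From Stdlib Require Import Reals Lra.
Open Scope R_scope.

(* Write s = e^{m (xi - tau)} = kap * e^{m xi}.  Then z := u(s)/gamma and
   Phi := e^{- m theta xi} wbar solve
     z'' + be z' = - e^{2 m xi} (z^p - eps z),   Phi'' + be Phi' = - e^{2 m xi} Phi^p
   with be = m (N - 2) and eps = m^2 kap^2 = gamma^{1-p}, and both tend to 1 at -oo
   with e^{- m xi} z' and e^{- m xi} Phi' tending to 0 (for Phi this is forced by
   the equation and the boundedness of Phi).  The energy
     V = (z - Phi)^2 + e^{- 2 m xi} (z' - Phi')^2
   satisfies V' <= e^{m xi} (K V + O(eps^2)) while z stays close to Phi, so a
   Gronwall-type continuity argument from -oo bounds V by O(eps^2) on (-oo, xibar].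
   Multiplying back by e^{m theta xi} gives the convergence of w and w'. *)

Lemma derivable_pt_lim_eq_l (h : R -> R) x l l' :
  derivable_pt_lim h x l -> l = l' -> derivable_pt_lim h x l'.
Proof. now intros H <-. Qed.

Lemma derivable_pt_lim_exp_scal c x :
  derivable_pt_lim (fun t => exp (c * t)) x (c * exp (c * x)).
Proof.
  eapply derivable_pt_lim_eq_l.
  - exact (derivable_pt_lim_comp (fun t => c * t) exp x _ _
      (derivable_pt_lim_scal id c x 1 (derivable_pt_lim_id x)) (derivable_pt_lim_exp _)).
  - cbv beta; ring.
Qed.

Lemma exp_le_mono x y : x <= y -> exp x <= exp y.
Proof. intros [Hlt|Heq]; [left; apply exp_increasing; exact Hlt|right; now rewrite Heq]. Qed.

Lemma Rdiv_le_0_compat a b : 0 <= a -> 0 < b -> 0 <= a / b.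
Proof. intros. apply Rmult_le_pos; [|left; apply Rinv_0_lt_compat]; auto. Qed.

Lemma Rpower_pos x y : 0 < Rpower x y.
Proof. apply exp_pos. Qed.

Lemma deriv_nonpos_le (h dh : R -> R) a b : a <= b ->
  (forall c, a <= c <= b -> derivable_pt_lim h c (dh c)) ->
  (forall c, a < c < b -> dh c <= 0) -> h b <= h a.
Proof.
  intros Hab Hh Hdh. destruct (Req_dec a b) as [->|Hne]; [lra|].
  destruct (MVT_cor2 h dh a b ltac:(lra) Hh) as [c [Hc Hcab]].
  specialize (Hdh c Hcab). nra.
Qed.

Lemma mean_value_abs_le (h dh g dg : R -> R) a b : a <= b ->
  (forall c, a <= c <= b -> derivable_pt_lim h c (dh c)) ->
  (forall c, a <= c <= b -> derivable_pt_lim g c (dg c)) ->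
  (forall c, a < c < b -> Rabs (dh c) <= dg c) ->
  Rabs (h b - h a) <= g b - g a.
Proof.
  intros Hab Hh Hg Hbnd.
  assert (Hup : h b - g b <= h a - g a).
  { apply (deriv_nonpos_le (fun t => h t - g t) (fun t => dh t - dg t) a b Hab).
    - intros c Hc. exact (derivable_pt_lim_minus h g c _ _ (Hh c Hc) (Hg c Hc)).
    - intros c Hc. pose proof (Rle_abs (dh c)). pose proof (Hbnd c Hc). lra. }
  assert (Hlo : - h b - g b <= - h a - g a).
  { apply (deriv_nonpos_le (fun t => - h t - g t) (fun t => - dh t - dg t) a b Hab).
    - intros c Hc. exact (derivable_pt_lim_minus _ g c _ _
        (derivable_pt_lim_opp h c _ (Hh c Hc)) (Hg c Hc)).
    - intros c Hc. pose proof (Rle_abs (- dh c)). rewrite Rabs_Ropp in H.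
      pose proof (Hbnd c Hc). lra. }
  apply Rabs_le. lra.
Qed.

Lemma Rabs_lt_of_sum_sqr_lt a a' d : 0 <= d -> a * a + a' * a' < d * d -> Rabs a < d.
Proof.
  intros Hd H. rewrite <- (Rabs_pos_eq d Hd). apply Rsqr_lt_abs_0. unfold Rsqr. nra.
Qed.

Definition vanishes_at_minfty (h : R -> R) : Prop :=
  forall e, 0 < e -> exists M, forall x, x < M -> Rabs (h x) < e.

Lemma vanishes_at_minfty_ext (h h' : R -> R) :
  (forall x, h x = h' x) -> vanishes_at_minfty h -> vanishes_at_minfty h'.
Proof.
  intros E H e He. destruct (H e He) as [M HM]. exists M. intros x Hx. rewrite <- E. auto.
Qed.

Lemma vanishes_at_minfty_dominated (h h' : R -> R) M :
  (forall x, x < M -> Rabs (h x) <= Rabs (h' x)) ->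
  vanishes_at_minfty h' -> vanishes_at_minfty h.
Proof.
  intros Hle H e He. destruct (H e He) as [M' HM']. exists (Rmin M M'). intros x Hx.
  pose proof (Rmin_l M M'). pose proof (Rmin_r M M').
  pose proof (Hle x ltac:(lra)). pose proof (HM' x ltac:(lra)). lra.
Qed.

Lemma vanishes_at_minfty_scal c (h : R -> R) :
  vanishes_at_minfty h -> vanishes_at_minfty (fun x => c * h x).
Proof.
  intros H e He. destruct (H (e / (Rabs c + 1))) as [M HM].
  { apply Rdiv_lt_0_compat; [lra|]. pose proof (Rabs_pos c). lra. }
  exists M. intros x Hx. specialize (HM x Hx). rewrite Rabs_mult.
  pose proof (Rabs_pos c). pose proof (Rabs_pos (h x)).
  assert (Rabs c * Rabs (h x) <= (Rabs c + 1) * Rabs (h x)) by nra.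
  assert (Hlt : (Rabs c + 1) * Rabs (h x) < (Rabs c + 1) * (e / (Rabs c + 1)))
    by (apply Rmult_lt_compat_l; lra).
  replace ((Rabs c + 1) * (e / (Rabs c + 1))) with e in Hlt by (field; lra). lra.
Qed.

Lemma vanishes_at_minfty_minus (h h' : R -> R) :
  vanishes_at_minfty h -> vanishes_at_minfty h' -> vanishes_at_minfty (fun x => h x - h' x).
Proof.
  intros H H' e He. destruct (H (e / 2)) as [M HM]; [lra|].
  destruct (H' (e / 2)) as [M' HM']; [lra|].
  exists (Rmin M M'). intros x Hx. pose proof (Rmin_l M M'). pose proof (Rmin_r M M').
  pose proof (HM x ltac:(lra)). pose proof (HM' x ltac:(lra)).
  pose proof (Rabs_triang (h x) (- h' x)) as Htri. rewrite Rabs_Ropp in Htri.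
  unfold Rminus. lra.
Qed.

Lemma vanishes_at_minfty_sum_sqr (h h' : R -> R) :
  vanishes_at_minfty h -> vanishes_at_minfty h' ->
  vanishes_at_minfty (fun x => h x * h x + h' x * h' x).
Proof.
  intros H H' e He. set (r := Rmin 1 (e / 3)).
  assert (Hr : 0 < r) by (apply Rmin_glb_lt; lra).
  pose proof (Rmin_l 1 (e / 3)). pose proof (Rmin_r 1 (e / 3)). fold r in H0, H1.
  destruct (H r Hr) as [M HM]. destruct (H' r Hr) as [M' HM'].
  exists (Rmin M M'). intros x Hx. pose proof (Rmin_l M M'). pose proof (Rmin_r M M').
  pose proof (HM x ltac:(lra)) as Hh. pose proof (HM' x ltac:(lra)) as Hh'.
  apply Rabs_def2 in Hh, Hh'. rewrite Rabs_pos_eq by nra. nra.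
Qed.

Lemma vanishes_at_minfty_exp m : 0 < m -> vanishes_at_minfty (fun x => exp (m * x)).
Proof.
  intros Hm e He. exists (ln e / m). intros x Hx.
  rewrite Rabs_pos_eq by (left; apply exp_pos). rewrite <- (exp_ln e He).
  apply exp_increasing. apply (Rmult_lt_compat_l m) in Hx; auto.
  replace (m * (ln e / m)) with (ln e) in Hx by (field; lra). exact Hx.
Qed.

Lemma vanishes_at_minfty_exp_comp (F : R -> R) l k m : 0 < k -> 0 < m ->
  (forall e, 0 < e -> exists d, 0 < d /\ forall s, 0 < s < d -> Rabs (F s - l) < e) ->
  vanishes_at_minfty (fun x => F (k * exp (m * x)) - l).
Proof.
  intros Hk Hm HF e He. destruct (HF e He) as [d [Hd HFd]].
  destruct (vanishes_at_minfty_exp m Hm (d / k)) as [M HM].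
  { apply Rdiv_lt_0_compat; lra. }
  exists M. intros x Hx. apply HFd. specialize (HM x Hx).
  rewrite Rabs_pos_eq in HM by (left; apply exp_pos).
  pose proof (exp_pos (m * x)). split; [nra|].
  apply (Rmult_lt_compat_l k) in HM; auto.
  replace (k * (d / k)) with d in HM by (field; lra). exact HM.
Qed.

Lemma le_of_vanishes_at_minfty (V : R -> R) w c x :
  vanishes_at_minfty V -> (forall a, a < x -> w <= Rabs (V a) + c) -> w <= c.
Proof.
  intros HV Hw. apply Rnot_lt_le. intros Hlt.
  destruct (HV (w - c)) as [M HM]; [lra|].
  set (a := Rmin M x - 1). pose proof (Rmin_l M x). pose proof (Rmin_r M x).
  pose proof (HM a ltac:(unfold a; lra)). pose proof (Hw a ltac:(unfold a; lra)). lra.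
Qed.

Lemma exp_neg_unbounded be Y M : 0 < be -> exists a, a < M /\ Y < exp (- be * a).
Proof.
  intros Hbe. exists (Rmin (M - 1) (- Rabs Y / be)).
  pose proof (Rmin_l (M - 1) (- Rabs Y / be)) as HaM.
  pose proof (Rmin_r (M - 1) (- Rabs Y / be)) as HaY.
  split; [lra|].
  set (a := Rmin (M - 1) (- Rabs Y / be)) in *.
  assert (Rabs Y <= - be * a).
  { apply (Rmult_le_compat_l be) in HaY; [|lra].
    replace (be * (- Rabs Y / be)) with (- Rabs Y) in HaY by (field; lra). lra. }
  pose proof (exp_ineq1_le (- be * a)). pose proof (Rle_abs Y). lra.
Qed.

Lemma halfline_bounds (h : R -> R) b :
  (forall x, continuity_pt h x) -> (forall x, 0 < h x) -> vanishes_at_minfty (fun x => h x - 1) ->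
  exists c B, 0 < c /\ forall x, x <= b -> c <= h x <= B.
Proof.
  intros Hcont Hpos Hlim. destruct (Hlim (1 / 2)) as [M HM]; [lra|].
  set (b' := Rmax (M - 1) b). assert (Hb' : M - 1 <= b') by apply Rmax_l.
  destruct (continuity_ab_min h (M - 1) b' Hb' (fun c _ => Hcont c)) as [xmin [Hmin _]].
  destruct (continuity_ab_maj h (M - 1) b' Hb' (fun c _ => Hcont c)) as [xmax [Hmax _]].
  exists (Rmin (1 / 2) (h xmin)), (Rmax (3 / 2) (h xmax)). split.
  { apply Rmin_glb_lt; [lra|apply Hpos]. }
  intros x Hx.
  pose proof (Rmin_l (1 / 2) (h xmin)). pose proof (Rmin_r (1 / 2) (h xmin)).
  pose proof (Rmax_l (3 / 2) (h xmax)). pose proof (Rmax_r (3 / 2) (h xmax)).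
  destruct (Rlt_dec x M) as [HxM|HxM].
  - specialize (HM x HxM). apply Rabs_def2 in HM. lra.
  - pose proof (Rmax_r (M - 1) b) as Hbb. fold b' in Hbb.
    pose proof (Hmin x ltac:(lra)). pose proof (Hmax x ltac:(lra)). lra.
Qed.

Lemma first_exit (V : R -> R) D x1 :
  (forall x, continuity_pt V x) -> (exists M, forall y, y < M -> V y < D) -> D <= V x1 ->
  exists s, s <= x1 /\ (forall y, y < s -> V y < D) /\ D <= V s.
Proof.
  intros HV [M HM] Hx1.
  set (T := fun t => t <= x1 /\ forall y, y <= t -> V y < D).
  assert (HTb : bound T) by (exists x1; intros t [Ht _]; exact Ht).
  assert (HTn : exists t, T t).
  { exists (Rmin M x1 - 1). pose proof (Rmin_l M x1). pose proof (Rmin_r M x1).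
    split; [lra|]. intros y Hy. apply HM. lra. }
  destruct (completeness T HTb HTn) as [s [Hub Hlub]].
  assert (Hsx : s <= x1) by (apply Hlub; intros t [Ht _]; exact Ht).
  assert (Hbelow : forall y, y < s -> V y < D).
  { intros y Hy. apply Rnot_le_lt. intros Hle.
    assert (s <= y); [|lra].
    apply Hlub. intros t [Htx Ht]. apply Rnot_lt_le. intros Hyt.
    specialize (Ht y ltac:(lra)). lra. }
  exists s. repeat split; auto.
  apply Rnot_lt_le. intros Hs.
  destruct (Req_dec s x1) as [->|Hne]; [lra|].
  destruct (HV s (D - V s)) as [d [Hd Hcont]]; [lra|].
  pose proof (Rmin_l (s + d / 2) x1). pose proof (Rmin_r (s + d / 2) x1).
  set (t := Rmin (s + d / 2) x1) in *.
  assert (HT : T t).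
  { unfold T; split; [lra|]. intros y Hy. destruct (Rlt_dec y s) as [Hys|Hys]; [auto|].
    destruct (Req_dec y s) as [->|Hyne]; [exact Hs|].
    assert (Hyd : Rabs (y - s) < d) by (apply Rabs_def1; lra).
    specialize (Hcont y (conj (conj I (not_eq_sym Hyne)) Hyd)). simpl in Hcont.
    unfold R_dist in Hcont. pose proof (Rle_abs (V y - V s)). lra. }
  specialize (Hub t HT). assert (s < t) by (unfold t; apply Rmin_glb_lt; lra). lra.
Qed.

Section Bootstrap.
Variables (V dV : R -> R) (k K C D b : R).
Hypotheses (Hk : 0 < k) (HK : 0 < K) (HC : 0 <= C)
  (HV : forall x, derivable_pt_lim V x (dV x))
  (HV0 : vanishes_at_minfty V)
  (HdV : forall x, x <= b -> V x < D -> dV x <= exp (k * x) * (K * V x + C)).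

Let bound := C / K * exp (K / k * exp (k * b)).

Lemma bootstrap_step x : x <= b -> (forall y, y < x -> V y < D) -> V x <= bound.
Proof.
  intros Hxb Hbelow.
  (* integrating factor of the linear inequality V' <= e^{k t} (K V + C) *)
  set (W t := exp (- (K / k) * exp (k * t)) * (V t + C / K)).
  set (dW t := exp (- (K / k) * exp (k * t)) * (dV t - exp (k * t) * (K * V t + C))).
  assert (HW : forall t, derivable_pt_lim W t (dW t)).
  { intros t. eapply derivable_pt_lim_eq_l.
    - exact (derivable_pt_lim_mult _ (fun t => V t + C / K) t _ _
        (derivable_pt_lim_comp (fun t => - (K / k) * exp (k * t)) exp t _ _
          (derivable_pt_lim_scal _ (- (K / k)) t _ (derivable_pt_lim_exp_scal k t))
          (derivable_pt_lim_exp _))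
        (derivable_pt_lim_plus V _ t _ _ (HV t) (derivable_pt_lim_const (C / K) t))).
    - unfold dW, comp; cbv beta; field; lra. }
  assert (Hdecr : forall a, a < x -> W x <= W a).
  { intros a Hax. apply (deriv_nonpos_le W dW a x); [lra| intros; apply HW|].
    intros c Hc. unfold dW.
    pose proof (HdV c ltac:(lra) (Hbelow c ltac:(lra))).
    pose proof (exp_pos (- (K / k) * exp (k * c))). nra. }
  assert (Hstart : forall a, W a <= Rabs (V a) + C / K).
  { intros a. unfold W.
    assert (He : exp (- (K / k) * exp (k * a)) <= 1).
    { rewrite <- exp_0. apply exp_le_mono.
      assert (0 < K / k) by (apply Rdiv_lt_0_compat; lra).
      pose proof (exp_pos (k * a)). nra. }
    pose proof (exp_pos (- (K / k) * exp (k * a))). pose proof (Rle_abs (V a)).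
    pose proof (Rabs_pos (V a)). assert (0 <= C / K) by (apply Rdiv_le_0_compat; lra).
    nra. }
  assert (HWx : W x <= C / K).
  { apply (le_of_vanishes_at_minfty V _ _ x HV0). intros a Ha.
    pose proof (Hdecr a Ha). pose proof (Hstart a). lra. }
  assert (Hgrow : exp (K / k * exp (k * x)) <= exp (K / k * exp (k * b))).
  { apply exp_le_mono. assert (0 < K / k) by (apply Rdiv_lt_0_compat; lra).
    assert (exp (k * x) <= exp (k * b)) by (apply exp_le_mono; nra). nra. }
  assert (HVx : V x = W x * exp (K / k * exp (k * x)) - C / K).
  { unfold W. rewrite Rmult_comm, <- Rmult_assoc, <- exp_plus.
    replace (K / k * exp (k * x) + - (K / k) * exp (k * x)) with 0 by ring.
    rewrite exp_0. ring. }
  unfold bound. rewrite HVx. assert (0 <= C / K) by (apply Rdiv_le_0_compat; lra).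
  pose proof (exp_pos (K / k * exp (k * x))). nra.
Qed.

Theorem gronwall_bootstrap : bound < D -> forall x, x <= b -> V x <= bound.
Proof.
  intros Hbound.
  assert (Hcont : forall x, continuity_pt V x).
  { intros x. apply derivable_continuous_pt. exists (dV x). apply HV. }
  assert (Hlow : exists M, forall y, y < M -> V y < D).
  { assert (0 <= bound).
    { unfold bound. pose proof (exp_pos (K / k * exp (k * b))).
      assert (0 <= C / K) by (apply Rdiv_le_0_compat; lra). nra. }
    destruct (HV0 D) as [M HM]; [lra|]. exists M. intros y Hy.
    pose proof (HM y Hy). pose proof (Rle_abs (V y)). lra. }
  assert (Hbelow : forall x, x <= b -> V x < D).
  { intros x1 Hx1. apply Rnot_le_lt. intros HD.
    destruct (first_exit V D x1 Hcont Hlow HD) as [s [Hs [Hbelow HDs]]].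
    pose proof (bootstrap_step s ltac:(lra) Hbelow). lra. }
  intros x Hx. apply bootstrap_step; auto. intros y Hy. apply Hbelow. lra.
Qed.
End Bootstrap.

Section DerivativeDecay.
Variables (P dP ddP : R -> R) (be k B x0 Bnd M0 : R).
Hypotheses (Hbe : 0 < be) (Hk : 0 < k) (HB : 0 <= B)
  (HP : forall x, derivable_pt_lim P x (dP x))
  (HdP : forall x, derivable_pt_lim dP x (ddP x))
  (Hforce : forall x, x <= x0 -> Rabs (ddP x + be * dP x) <= B * exp (k * x))
  (HPbnd : forall x, x < M0 -> Rabs (P x) <= Bnd).

Let q x := exp (be * x) * dP x.
Let rem x := B / (be + k) * exp ((be + k) * x).

Lemma rem_nonneg x : 0 <= rem x.
Proof.
  unfold rem. apply Rmult_le_pos; [apply Rdiv_le_0_compat; lra|left; apply exp_pos].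
Qed.

Lemma q_oscillation a b : a <= b -> b <= x0 -> Rabs (q b - q a) <= rem b.
Proof.
  intros Hab Hb.
  assert (Hosc : Rabs (q b - q a) <= rem b - rem a).
  { apply (mean_value_abs_le q (fun t => exp (be * t) * (ddP t + be * dP t))
             rem (fun t => B * exp ((be + k) * t)) a b Hab).
    - intros c _. eapply derivable_pt_lim_eq_l.
      + exact (derivable_pt_lim_mult _ dP c _ _ (derivable_pt_lim_exp_scal be c) (HdP c)).
      + cbv beta; ring.
    - intros c _. eapply derivable_pt_lim_eq_l.
      + exact (derivable_pt_lim_scal _ (B / (be + k)) c _ (derivable_pt_lim_exp_scal (be + k) c)).
      + field; lra.
    - intros c Hc. rewrite Rabs_mult, Rabs_pos_eq by (left; apply exp_pos).
      replace ((be + k) * c) with (be * c + k * c) by ring. rewrite exp_plus.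
      pose proof (Hforce c ltac:(lra)). pose proof (exp_pos (be * c)). nra. }
  pose proof (rem_nonneg a). lra.
Qed.

(* If [q b] were large, [dP] would be bounded below by a multiple of [exp (- be x)]
   on [(-oo, b]], forcing [P] to be unbounded there. *)
Lemma q_upper b : b <= x0 -> b < M0 -> q b <= 2 * rem b.
Proof.
  intros Hb0 HbM. apply Rnot_lt_le. intros Hlarge.
  pose proof (rem_nonneg b). set (k1 := q b / 2).
  assert (Hk1 : 0 < k1) by (unfold k1; lra).
  assert (HdP_low : forall a, a <= b -> k1 * exp (- be * a) <= dP a).
  { intros a Ha. pose proof (q_oscillation a b Ha Hb0) as Hosc.
    pose proof (Rle_abs (q b - q a)).
    assert (Hqa : k1 <= q a) by (unfold k1; lra). unfold q in Hqa.
    replace (dP a) with (exp (- be * a) * (exp (be * a) * dP a)).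
    - pose proof (exp_pos (- be * a)). nra.
    - rewrite <- Rmult_assoc, <- exp_plus. replace (- be * a + be * a) with 0 by ring.
      rewrite exp_0. ring. }
  set (h t := P t + k1 / be * exp (- be * t)).
  assert (Hh : forall a, a <= b -> h a <= h b).
  { intros a Ha.
    enough (- h b <= - h a) by lra.
    apply (deriv_nonpos_le (fun t => - h t)
             (fun t => - (dP t + k1 / be * (- be * exp (- be * t)))) a b Ha).
    - intros c _. apply derivable_pt_lim_opp. apply derivable_pt_lim_plus; [apply HP|].
      exact (derivable_pt_lim_scal _ (k1 / be) c _ (derivable_pt_lim_exp_scal (- be) c)).
    - intros c Hc. pose proof (HdP_low c ltac:(lra)).
      replace (k1 / be * (- be * exp (- be * c))) with (- (k1 * exp (- be * c)))
        by (field; lra).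
      lra. }
  destruct (exp_neg_unbounded be ((h b + Bnd) * be / k1 + 1) (Rmin M0 b) Hbe)
    as [a [Ha Hexp]].
  pose proof (Rmin_l M0 b). pose proof (Rmin_r M0 b).
  pose proof (Hh a ltac:(lra)) as Hha. pose proof (HPbnd a ltac:(lra)).
  pose proof (Rle_abs (- P a)) as HPa. rewrite Rabs_Ropp in HPa.
  assert (Hbig : h b + Bnd < k1 / be * exp (- be * a)).
  { apply (Rmult_lt_compat_l (k1 / be)) in Hexp; [|apply Rdiv_lt_0_compat; lra].
    replace (k1 / be * ((h b + Bnd) * be / k1 + 1)) with (h b + Bnd + k1 / be)
      in Hexp by (field; lra).
    assert (0 < k1 / be) by (apply Rdiv_lt_0_compat; lra). lra. }
  unfold h in Hha, Hbig. lra.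
Qed.
End DerivativeDecay.

Theorem derivative_decay (P dP ddP : R -> R) be k B x0 Bnd M0 :
  0 < be -> 0 < k -> 0 <= B ->
  (forall x, derivable_pt_lim P x (dP x)) ->
  (forall x, derivable_pt_lim dP x (ddP x)) ->
  (forall x, x <= x0 -> Rabs (ddP x + be * dP x) <= B * exp (k * x)) ->
  (forall x, x < M0 -> Rabs (P x) <= Bnd) ->
  forall b, b <= x0 -> b < M0 -> Rabs (dP b) <= 2 * (B / (be + k)) * exp (k * b).
Proof.
  intros Hbe Hk HB HP HdP Hforce HPbnd b Hb0 HbM.
  pose proof (q_upper P dP ddP be k B x0 Bnd M0 Hbe Hk HB HP HdP Hforce HPbnd b Hb0 HbM)
    as Hup. cbv beta in Hup.
  pose proof (q_upper (fun x => - P x) (fun x => - dP x) (fun x => - ddP x)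
    be k B x0 Bnd M0 Hbe Hk HB (fun x => derivable_pt_lim_opp P x _ (HP x))
    (fun x => derivable_pt_lim_opp dP x _ (HdP x))) as Hlow.
  assert (Hlow' : exp (be * b) * - dP b <= 2 * (B / (be + k) * exp ((be + k) * b))).
  { apply Hlow; auto.
    - intros x Hx. replace (- ddP x + be * - dP x) with (- (ddP x + be * dP x)) by ring.
      rewrite Rabs_Ropp. auto.
    - intros x Hx. rewrite Rabs_Ropp. auto. }
  replace ((be + k) * b) with (be * b + k * b) in Hup, Hlow' by ring.
  rewrite exp_plus in Hup, Hlow'. pose proof (exp_pos (be * b)).
  apply Rabs_le. split; nra.
Qed.

Lemma Rpower_lipschitz lo hi p x y : 0 < lo -> 1 <= p -> lo <= x <= hi -> lo <= y <= hi ->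
  Rabs (Rpower x p - Rpower y p) <= p * Rpower hi (p - 1) * Rabs (x - y).
Proof.
  intros Hlo Hp.
  assert (Hmono : forall a b, lo <= a <= b -> b <= hi ->
            Rabs (Rpower b p - Rpower a p) <= p * Rpower hi (p - 1) * (b - a)).
  { intros a b Ha Hb.
    replace (p * Rpower hi (p - 1) * (b - a))
      with (p * Rpower hi (p - 1) * b - p * Rpower hi (p - 1) * a) by ring.
    apply (mean_value_abs_le (fun t => Rpower t p) (fun t => p * Rpower t (p - 1))
             (fun t => p * Rpower hi (p - 1) * t) (fun _ => p * Rpower hi (p - 1)) a b);
      [lra| | |].
    - intros c Hc. apply derivable_pt_lim_power. lra.
    - intros c _. eapply derivable_pt_lim_eq_l.
      + exact (derivable_pt_lim_scal id _ c _ (derivable_pt_lim_id c)).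
      + ring.
    - intros c Hc. pose proof (Rpower_pos c (p - 1)).
      rewrite Rabs_pos_eq by (apply Rmult_le_pos; lra).
      apply Rmult_le_compat_l; [lra|]. apply Rle_Rpower_l; lra. }
  intros Hx Hy. destruct (Rle_dec x y) as [Hxy|Hxy].
  - rewrite <- Rabs_Ropp, (Rabs_left1 (x - y)) by lra.
    replace (- (Rpower x p - Rpower y p)) with (Rpower y p - Rpower x p) by ring.
    replace (- (x - y)) with (y - x) by ring. apply Hmono; lra.
  - rewrite (Rabs_pos_eq (x - y)) by lra. apply Hmono; lra.
Qed.

(* The two cross terms are absorbed by AM-GM. *)
Lemma energy_ineq E X e L Dg c g : 0 < e -> 0 <= L -> 0 <= g -> 0 <= c ->
  Rabs Dg <= L * Rabs E + c ->
  2 * e * E * X - 2 * g * X * X - 2 * e * X * Dg <= e * ((2 + L) * (E * E + X * X) + c * c).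
Proof.
  intros He HL Hg Hc HDg.
  assert (HEX : E * X <= Rabs E * Rabs X) by (rewrite <- Rabs_mult; apply Rle_abs).
  assert (HXD : - (X * Dg) <= Rabs X * Rabs Dg)
    by (rewrite <- Rabs_mult, <- Rabs_Ropp; apply Rle_abs).
  assert (HE2 : Rabs E * Rabs E = E * E) by (rewrite <- Rabs_mult; apply Rabs_pos_eq; nra).
  assert (HX2 : Rabs X * Rabs X = X * X) by (rewrite <- Rabs_mult; apply Rabs_pos_eq; nra).
  pose proof (Rabs_pos E). pose proof (Rabs_pos X). pose proof (Rabs_pos Dg).
  assert (Hcross : E * X - X * Dg <= (2 + L) * (E * E + X * X) / 2 + c * c / 2).
  { assert (Rabs X * Rabs Dg <= Rabs X * (L * Rabs E + c)) by (apply Rmult_le_compat_l; lra).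
    pose proof (Rle_0_sqr (Rabs E - Rabs X)). pose proof (Rle_0_sqr (Rabs X - c)).
    assert (0 <= L * Rsqr (Rabs E - Rabs X)) by (apply Rmult_le_pos; [lra|apply Rle_0_sqr]).
    rewrite <- HE2, <- HX2. unfold Rsqr in *. nra. }
  assert (0 <= g * (X * X)) by (apply Rmult_le_pos; nra).
  nra.
Qed.

Section Comparison.
Variables (m be p c Bp b : R).
Hypotheses (Hm : 0 < m) (Hbe : 0 < be) (Hp : 1 <= p) (Hc : 0 < c).
Variables (Phi dPhi ddPhi : R -> R).
Hypotheses (HPhi : forall x, derivable_pt_lim Phi x (dPhi x))
  (HdPhi : forall x, derivable_pt_lim dPhi x (ddPhi x))
  (HPhi_ode : forall x, ddPhi x + be * dPhi x = - (exp (2 * m * x) * Rpower (Phi x) p))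
  (HPhi_bnd : forall x, x <= b -> c <= Phi x <= Bp)
  (HPhi_lim : vanishes_at_minfty (fun x => Phi x - 1))
  (HdPhi_lim : vanishes_at_minfty (fun x => exp (- m * x) * dPhi x)).

Let hi := Bp + c / 2.
Let K := 2 + p * Rpower hi (p - 1).

Lemma K_pos : 0 < K.
Proof. unfold K. pose proof (Rpower_pos hi (p - 1)). nra. Qed.

Section Perturbation.
Variables (ep : R) (z dz ddz : R -> R).
Hypotheses (Hep : 0 <= ep)
  (Hz : forall x, derivable_pt_lim z x (dz x))
  (Hdz : forall x, derivable_pt_lim dz x (ddz x))
  (Hz_ode : forall x, 0 < z x ->
     ddz x + be * dz x = - (exp (2 * m * x) * (Rpower (z x) p - ep * z x)))
  (Hz_lim : vanishes_at_minfty (fun x => z x - 1))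
  (Hdz_lim : vanishes_at_minfty (fun x => exp (- m * x) * dz x)).

Let E x := z x - Phi x.
Let X x := exp (- m * x) * (dz x - dPhi x).
Let V x := E x * E x + X x * X x.
Let dV x := 2 * E x * (dz x - dPhi x)
  + 2 * X x * (- m * X x + exp (- m * x) * (ddz x - ddPhi x)).

Lemma energy_derivable x : derivable_pt_lim V x (dV x).
Proof.
  assert (HE : derivable_pt_lim E x (dz x - dPhi x))
    by exact (derivable_pt_lim_minus z Phi x _ _ (Hz x) (HPhi x)).
  assert (HX : derivable_pt_lim X x (- m * X x + exp (- m * x) * (ddz x - ddPhi x))).
  { eapply derivable_pt_lim_eq_l.
    - exact (derivable_pt_lim_mult _ (fun t => dz t - dPhi t) x _ _
        (derivable_pt_lim_exp_scal (- m) x)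
        (derivable_pt_lim_minus dz dPhi x _ _ (Hdz x) (HdPhi x))).
    - unfold X; cbv beta; ring. }
  eapply derivable_pt_lim_eq_l.
  - exact (derivable_pt_lim_plus _ _ x _ _
      (derivable_pt_lim_mult E E x _ _ HE HE) (derivable_pt_lim_mult X X x _ _ HX HX)).
  - unfold dV. ring.
Qed.

Lemma energy_vanishes : vanishes_at_minfty V.
Proof.
  apply vanishes_at_minfty_sum_sqr.
  - apply (vanishes_at_minfty_ext (fun x => (z x - 1) - (Phi x - 1))).
    + intros x. unfold E. ring.
    + apply vanishes_at_minfty_minus; assumption.
  - apply (vanishes_at_minfty_ext (fun x => exp (- m * x) * dz x - exp (- m * x) * dPhi x)).
    + intros x. unfold X. ring.
    + apply vanishes_at_minfty_minus; assumption.
Qed.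

Lemma energy_growth x : x <= b -> V x < c / 2 * (c / 2) ->
  dV x <= exp (m * x) * (K * V x + ep * hi * (ep * hi)).
Proof.
  intros Hx HV.
  assert (HE : Rabs (E x) < c / 2) by (apply (Rabs_lt_of_sum_sqr_lt _ (X x)); [lra|exact HV]).
  apply Rabs_def2 in HE. pose proof (HPhi_bnd x Hx).
  assert (Hzx : c / 2 <= z x <= hi) by (unfold E, hi in *; lra).
  set (Dg := Rpower (z x) p - Rpower (Phi x) p - ep * z x).
  assert (HDg : Rabs Dg <= p * Rpower hi (p - 1) * Rabs (E x) + ep * hi).
  { assert (Hlip : Rabs (Rpower (z x) p - Rpower (Phi x) p)
                     <= p * Rpower hi (p - 1) * Rabs (E x))
      by (apply (Rpower_lipschitz (c / 2)); unfold hi in *; lra).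
    assert (Hlin : Rabs (ep * z x) <= ep * hi).
    { rewrite Rabs_mult, !Rabs_pos_eq by lra. apply Rmult_le_compat_l; lra. }
    pose proof (Rabs_triang (Rpower (z x) p - Rpower (Phi x) p) (- (ep * z x))) as Htri.
    rewrite Rabs_Ropp in Htri. unfold Dg.
    replace (Rpower (z x) p - Rpower (Phi x) p - ep * z x)
      with (Rpower (z x) p - Rpower (Phi x) p + - (ep * z x)) by ring.
    lra. }
  assert (Hunscale : dz x - dPhi x = exp (m * x) * X x).
  { unfold X. rewrite <- Rmult_assoc, <- exp_plus.
    replace (m * x + - m * x) with 0 by ring. rewrite exp_0. ring. }
  assert (Hdiff : exp (- m * x) * (ddz x - ddPhi x) = - be * X x - exp (m * x) * Dg).
  { assert (Hzode := Hz_ode x ltac:(lra)). pose proof (HPhi_ode x).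
    replace (ddz x - ddPhi x) with (- be * (dz x - dPhi x) - exp (2 * m * x) * Dg)
      by (unfold Dg; lra).
    rewrite Hunscale. replace (2 * m * x) with (m * x + m * x) by ring.
    rewrite exp_plus. replace (- m * x) with (- (m * x)) by ring. rewrite exp_Ropp.
    pose proof (exp_pos (m * x)). field. lra. }
  assert (HdV : dV x = 2 * exp (m * x) * E x * X x - 2 * (m + be) * X x * X x
                       - 2 * exp (m * x) * X x * Dg).
  { unfold dV. rewrite Hdiff, Hunscale. ring. }
  rewrite HdV.
  pose proof (energy_ineq (E x) (X x) (exp (m * x)) (p * Rpower hi (p - 1)) Dg (ep * hi)
    (m + be) (exp_pos _)) as Hineq.
  pose proof (Rpower_pos hi (p - 1)).
  unfold V, K. apply Hineq; unfold hi in *; nra.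
Qed.

Lemma energy_bound :
  ep * hi * (ep * hi) / K * exp (K / m * exp (m * b)) < c / 2 * (c / 2) ->
  forall x, x <= b -> V x <= ep * hi * (ep * hi) / K * exp (K / m * exp (m * b)).
Proof.
  intros Hsmall. apply (gronwall_bootstrap V dV m K _ (c / 2 * (c / 2)) b Hm K_pos).
  - apply Rle_0_sqr.
  - exact energy_derivable.
  - exact energy_vanishes.
  - exact energy_growth.
  - exact Hsmall.
Qed.
End Perturbation.

Theorem perturbation_close eta : 0 < eta -> exists ep0, 0 < ep0 /\
  forall ep z dz ddz, 0 <= ep < ep0 ->
  (forall x, derivable_pt_lim z x (dz x)) ->
  (forall x, derivable_pt_lim dz x (ddz x)) ->
  (forall x, 0 < z x ->
     ddz x + be * dz x = - (exp (2 * m * x) * (Rpower (z x) p - ep * z x))) ->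
  vanishes_at_minfty (fun x => z x - 1) ->
  vanishes_at_minfty (fun x => exp (- m * x) * dz x) ->
  forall x, x <= b ->
  Rabs (z x - Phi x) < eta /\ Rabs (exp (- m * x) * (dz x - dPhi x)) < eta.
Proof.
  intros Heta.
  set (T := exp (K / m * exp (m * b)) / K).
  assert (HT : 0 < T) by (apply Rdiv_lt_0_compat; [apply exp_pos|apply K_pos]).
  set (eta' := Rmin (c / 2) eta).
  pose proof (Rmin_l (c / 2) eta) as Hc2. pose proof (Rmin_r (c / 2) eta) as Heta2.
  fold eta' in Hc2, Heta2.
  assert (Heta' : 0 < eta') by (apply Rmin_glb_lt; lra).
  assert (Hhi : 0 < hi).
  { unfold hi. pose proof (HPhi_bnd (Rmin b 0) (Rmin_l b 0)). lra. }
  exists (eta' / ((hi + 1) * (T + 1))). split.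
  { apply Rdiv_lt_0_compat; nra. }
  intros ep z dz ddz [Hep Hep0] Hz Hdz Hz_ode Hz_lim Hdz_lim x Hx.
  assert (Hsmall : ep * hi * (ep * hi) / K * exp (K / m * exp (m * b)) < eta' * eta').
  { replace (ep * hi * (ep * hi) / K * exp (K / m * exp (m * b)))
      with (ep * hi * (ep * hi) * T) by (unfold T; pose proof K_pos; field; lra).
    assert (Hephi : ep * hi * (T + 1) < eta').
    { apply (Rmult_lt_compat_r ((hi + 1) * (T + 1))) in Hep0; [|nra].
      replace (eta' / ((hi + 1) * (T + 1)) * ((hi + 1) * (T + 1))) with eta' in Hep0
        by (field; lra).
      nra. }
    assert (0 <= ep * hi) by nra.
    assert (ep * hi * (T + 1) * (ep * hi * (T + 1)) < eta' * eta')
      by (apply Rmult_le_0_lt_compat; nra).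
    assert (ep * hi * (ep * hi) * T <= ep * hi * (ep * hi) * ((T + 1) * (T + 1)))
      by (apply Rmult_le_compat_l; nra).
    nra. }
  pose proof (energy_bound ep z dz ddz Hep Hz Hdz Hz_ode Hz_lim Hdz_lim ltac:(nra) x Hx)
    as HV.
  cbv beta in HV.
  split; [apply (Rabs_lt_of_sum_sqr_lt _ (exp (- m * x) * (dz x - dPhi x)))
         |apply (Rabs_lt_of_sum_sqr_lt _ (z x - Phi x))]; nra.
Qed.
End Comparison.

Lemma weighted_close a m b xi eta z Phi dz dPhi : 0 < a -> 0 < m -> xi <= b ->
  Rabs (z - Phi) < eta -> Rabs (exp (- m * xi) * (dz - dPhi)) < eta ->
  Rabs (exp (a * xi) * z - exp (a * xi) * Phi) < exp (a * b) * (1 + a + exp (m * b)) * eta /\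
  Rabs ((a * exp (a * xi) * z + exp (a * xi) * dz)
        - (a * exp (a * xi) * Phi + exp (a * xi) * dPhi))
    < exp (a * b) * (1 + a + exp (m * b)) * eta.
Proof.
  intros Ha Hm Hxi HE HX.
  set (X := exp (- m * xi) * (dz - dPhi)) in *.
  assert (Heta : 0 < eta) by (pose proof (Rabs_pos (z - Phi)); lra).
  assert (Hea : exp (a * xi) <= exp (a * b)) by (apply exp_le_mono; nra).
  assert (Hem : exp (m * xi) <= exp (m * b)) by (apply exp_le_mono; nra).
  pose proof (exp_pos (a * xi)). pose proof (exp_pos (m * xi)). pose proof (exp_pos (a * b)).
  assert (Hunscale : dz - dPhi = exp (m * xi) * X).
  { unfold X. rewrite <- Rmult_assoc, <- exp_plus.
    replace (m * xi + - m * xi) with 0 by ring. rewrite exp_0. ring. }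
  assert (Hslack : 0 < exp (a * b) * ((a + exp (m * b)) * eta)).
  { pose proof (exp_pos (m * b)). apply Rmult_lt_0_compat; [lra|nra]. }
  replace (exp (a * b) * (1 + a + exp (m * b)) * eta)
    with (exp (a * b) * eta + exp (a * b) * ((a + exp (m * b)) * eta)) by ring.
  split.
  - replace (exp (a * xi) * z - exp (a * xi) * Phi) with (exp (a * xi) * (z - Phi)) by ring.
    rewrite Rabs_mult, (Rabs_pos_eq (exp _)) by lra.
    pose proof (Rabs_pos (z - Phi)). pose proof (exp_pos (m * b)).
    assert (exp (a * xi) * Rabs (z - Phi) <= exp (a * b) * eta)
      by (apply Rmult_le_compat; lra).
    lra.
  - replace ((a * exp (a * xi) * z + exp (a * xi) * dz)
             - (a * exp (a * xi) * Phi + exp (a * xi) * dPhi))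
      with (exp (a * xi) * (a * (z - Phi) + exp (m * xi) * X))
      by (rewrite <- Hunscale; ring).
    rewrite Rabs_mult, (Rabs_pos_eq (exp _)) by lra.
    pose proof (Rabs_triang (a * (z - Phi)) (exp (m * xi) * X)) as Htri.
    rewrite !Rabs_mult, (Rabs_pos_eq a), (Rabs_pos_eq (exp (m * xi))) in Htri by lra.
    pose proof (Rabs_pos (z - Phi)). pose proof (Rabs_pos X).
    assert (Rabs (a * (z - Phi) + exp (m * xi) * X) <= (a + exp (m * b)) * eta) by nra.
    assert (exp (a * xi) * Rabs (a * (z - Phi) + exp (m * xi) * X)
            <= exp (a * b) * ((a + exp (m * b)) * eta))
      by (apply Rmult_le_compat; try lra; apply Rabs_pos).
    nra.
Qed.

Section Constants.
Variables (N : nat) (p : R).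
Hypotheses (HN : (3 <= N)%nat) (Hp : pS N < p).

Let Q := theta p * (INR N - 2 - theta p).

Lemma INR_ge_3 : 3 <= INR N.
Proof. replace 3 with (INR 3) by (simpl; ring). now apply le_INR. Qed.

Lemma p_gt_1 : 1 < p.
Proof.
  pose proof INR_ge_3. unfold pS in Hp.
  assert (1 < (INR N + 2) / (INR N - 2)).
  { apply (Rmult_lt_reg_r (INR N - 2)); [lra|]. unfold Rdiv.
    rewrite Rmult_assoc, Rinv_l by lra. lra. }
  lra.
Qed.

Lemma theta_pos : 0 < theta p.
Proof. pose proof p_gt_1. unfold theta. apply Rdiv_lt_0_compat; lra. Qed.

Lemma p_minus_1_theta : (p - 1) * theta p = 2.
Proof. pose proof p_gt_1. unfold theta. field. lra. Qed.

Lemma Q_pos : 0 < Q.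
Proof.
  pose proof INR_ge_3. pose proof p_gt_1. pose proof theta_pos. pose proof p_minus_1_theta.
  unfold pS in Hp.
  assert (Hsup : INR N + 2 < p * (INR N - 2)).
  { apply (Rmult_lt_compat_r (INR N - 2)) in Hp; [|lra].
    unfold Rdiv in Hp. rewrite Rmult_assoc, Rinv_l in Hp by lra. lra. }
  unfold Q. nra.
Qed.

Lemma mcst_pos : 0 < mcst N p.
Proof. apply Rinv_0_lt_compat, sqrt_lt_R0, Q_pos. Qed.

Lemma mcst_sqr_Q : mcst N p * mcst N p * Q = 1.
Proof.
  pose proof Q_pos. unfold mcst. fold Q.
  rewrite <- Rinv_mult, sqrt_sqrt by lra. field. lra.
Qed.

Lemma alpha_mtheta :
  mcst N p * theta p * (mcst N p * theta p) + alpha N p * (mcst N p * theta p) = 1.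
Proof. pose proof mcst_sqr_Q as HmQ. unfold alpha. unfold Q in HmQ. nra. Qed.

Lemma Acst_pos : 0 < Acst N p.
Proof. apply Rpower_pos. Qed.

Lemma Acst_pow : Rpower (Acst N p) (p - 1) = Q.
Proof.
  pose proof p_gt_1. pose proof Q_pos. unfold Acst. fold Q.
  rewrite Rpower_mult. replace (1 / (p - 1) * (p - 1)) with 1 by (field; lra).
  now apply Rpower_1.
Qed.

(* The radius [e^{m (xi - tau)}] at which [w (xi)] samples [u] is [kap g * e^{m xi}]. *)
Definition kap (g : R) : R := exp (- (mcst N p * taufun N p g)).

Lemma kap_scaling g : 0 < g -> mcst N p * mcst N p * (kap g * kap g) * Rpower g (p - 1) = 1.
Proof.
  intros Hg. pose proof mcst_pos. pose proof p_gt_1.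
  assert (Hk : kap g * kap g * Rpower g (p - 1) = Rpower (Acst N p) (p - 1)).
  { unfold kap, Rpower, taufun. rewrite <- !exp_plus. f_equal.
    unfold theta. field. split; lra. }
  rewrite Rmult_assoc, Hk, Acst_pow. apply mcst_sqr_Q.
Qed.

Lemma kap_sqr_small eps : 0 < eps ->
  exists G, 0 < G /\ forall g, G < g -> mcst N p * mcst N p * (kap g * kap g) < eps.
Proof.
  intros Heps. pose proof p_gt_1.
  exists (Rpower (/ eps) (/ (p - 1))). split; [apply Rpower_pos|].
  intros g Hg. assert (Hg0 : 0 < g) by (pose proof (Rpower_pos (/ eps) (/ (p - 1))); lra).
  assert (Hbig : / eps < Rpower g (p - 1)).
  { replace (/ eps) with (Rpower (Rpower (/ eps) (/ (p - 1))) (p - 1)).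
    - apply Rlt_Rpower_l; [lra|split; [apply Rpower_pos|exact Hg]].
    - rewrite Rpower_mult. replace (/ (p - 1) * (p - 1)) with 1 by (field; lra).
      apply Rpower_1. apply Rinv_0_lt_compat. lra. }
  pose proof (kap_scaling g Hg0). pose proof (Rpower_pos g (p - 1)).
  set (ep := mcst N p * mcst N p * (kap g * kap g)) in *.
  apply (Rmult_lt_compat_l eps) in Hbig; [|lra]. rewrite Rinv_r in Hbig by lra. nra.
Qed.

End Constants.

Section Profile.
Variables (N : nat) (p : R) (wbar dwbar : R -> R).
Hypotheses (HN : (3 <= N)%nat) (Hp : pS N < p)
  (Hw : forall xi, derivable_pt_lim wbar xi (dwbar xi))
  (Hdw : forall xi, derivable_pt_lim dwbar xi
                      (- alpha N p * dwbar xi + wbar xi - rpow (wbar xi) p))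
  (Hwpos : forall xi, 0 < wbar xi)
  (Hwlim : forall eps, 0 < eps -> exists M, forall xi, xi < M ->
     Rabs (exp (- (mcst N p * theta p * xi)) * wbar xi - 1) < eps).

Let m := mcst N p.
Let a := m * theta p.
Let be := m * (INR N - 2).

Definition Phi x := exp (- (a * x)) * wbar x.
Definition dPhi x := exp (- (a * x)) * (dwbar x - a * wbar x).
Definition ddPhi x := exp (- (a * x))
  * (- alpha N p * dwbar x + wbar x - rpow (wbar x) p - 2 * a * dwbar x + a * a * wbar x).

Lemma exp_neg_derivable x : derivable_pt_lim (fun t => exp (- (a * t))) x (- a * exp (- (a * x))).
Proof.
  apply (derivable_pt_lim_ext (fun t => exp (- a * t))).
  - intros t. f_equal. ring.
  - replace (- (a * x)) with (- a * x) by ring. apply derivable_pt_lim_exp_scal.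
Qed.

Lemma Phi_derivable x : derivable_pt_lim Phi x (dPhi x).
Proof.
  eapply derivable_pt_lim_eq_l.
  - exact (derivable_pt_lim_mult _ wbar x _ _ (exp_neg_derivable x) (Hw x)).
  - unfold dPhi. ring.
Qed.

Lemma dPhi_derivable x : derivable_pt_lim dPhi x (ddPhi x).
Proof.
  eapply derivable_pt_lim_eq_l.
  - exact (derivable_pt_lim_mult _ (fun t => dwbar t - a * wbar t) x _ _ (exp_neg_derivable x)
      (derivable_pt_lim_minus dwbar _ x _ _ (Hdw x) (derivable_pt_lim_scal wbar a x _ (Hw x)))).
  - unfold ddPhi. cbv beta. ring.
Qed.

Lemma Phi_ode x : ddPhi x + be * dPhi x = - (exp (2 * m * x) * Rpower (Phi x) p).
Proof.
  pose proof (alpha_mtheta N p HN Hp) as Halpha. fold m a in Halpha.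
  pose proof (p_minus_1_theta N p HN Hp). pose proof (Hwpos x).
  assert (Hbe : be = 2 * a + alpha N p) by (unfold be, a, alpha; fold m; ring).
  assert (Hexp : exp (2 * m * x) * Rpower (exp (- (a * x))) p = exp (- (a * x))).
  { unfold Rpower. rewrite ln_exp, <- exp_plus. f_equal.
    unfold a. replace 2 with ((p - 1) * theta p) at 1 by assumption. ring. }
  unfold Phi, dPhi, ddPhi, rpow. destruct (Rlt_dec 0 (wbar x)) as [_|]; [|lra].
  rewrite <- Rpower_mult_distr by (auto; apply exp_pos).
  replace (exp (2 * m * x) * (Rpower (exp (- (a * x))) p * Rpower (wbar x) p))
    with (exp (- (a * x)) * Rpower (wbar x) p) by (rewrite <- Rmult_assoc, Hexp; reflexivity).
  assert (exp (- (a * x)) * wbar x * (a * a + alpha N p * a) = exp (- (a * x)) * wbar x)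
    by (rewrite Halpha; ring).
  rewrite Hbe. lra.
Qed.

Lemma Phi_bounds b : exists c B, 0 < c /\ forall x, x <= b -> c <= Phi x <= B.
Proof.
  apply halfline_bounds.
  - intros x. apply derivable_continuous_pt. exists (dPhi x). apply Phi_derivable.
  - intros x. unfold Phi. pose proof (exp_pos (- (a * x))). pose proof (Hwpos x). nra.
  - exact Hwlim.
Qed.

Lemma dPhi_vanishes : vanishes_at_minfty (fun x => exp (- m * x) * dPhi x).
Proof.
  pose proof (mcst_pos N p HN Hp) as Hm. fold m in Hm. pose proof (p_gt_1 N p HN Hp).
  assert (Hbe : 0 < be) by (pose proof (INR_ge_3 N HN); unfold be; nra).
  destruct (Hwlim (1 / 2)) as [M HM]; [lra|].
  assert (HPhi : forall x, x < M -> 0 < Phi x <= 3 / 2).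
  { intros x Hx. specialize (HM x Hx). apply Rabs_def2 in HM. unfold Phi, a, m. lra. }
  set (C2 := 2 * (Rpower (3 / 2) p / (be + 2 * m))).
  assert (HC2 : 0 <= C2).
  { apply Rmult_le_pos; [lra|apply Rdiv_le_0_compat; [left; apply Rpower_pos|lra]]. }
  assert (Hdecay : forall x, x <= M - 1 -> Rabs (dPhi x) <= C2 * exp (2 * m * x)).
  { intros x Hx.
    apply (derivative_decay Phi dPhi ddPhi be (2 * m) _ (M - 1) (3 / 2) M);
      try lra; auto using Phi_derivable, dPhi_derivable.
    - left; apply Rpower_pos.
    - intros y Hy. rewrite Phi_ode, Rabs_Ropp, Rabs_mult, !Rabs_pos_eq
        by (left; apply exp_pos || apply Rpower_pos).
      rewrite Rmult_comm. apply Rmult_le_compat_r; [left; apply exp_pos|].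
      apply Rle_Rpower_l; [lra|]. pose proof (HPhi y ltac:(lra)). lra.
    - intros y Hy. pose proof (HPhi y Hy). rewrite Rabs_pos_eq; lra. }
  apply (vanishes_at_minfty_dominated _ (fun x => C2 * exp (m * x)) (M - 1)).
  - intros x Hx. specialize (Hdecay x ltac:(lra)).
    rewrite Rabs_mult, (Rabs_pos_eq (exp _)) by (left; apply exp_pos).
    rewrite (Rabs_pos_eq (C2 * exp (m * x))) by (pose proof (exp_pos (m * x)); nra).
    replace (C2 * exp (m * x)) with (exp (- m * x) * (C2 * exp (2 * m * x))).
    + apply Rmult_le_compat_l; [left; apply exp_pos|exact Hdecay].
    + replace (2 * m * x) with (m * x + m * x) by ring. rewrite exp_plus.
      replace (- m * x) with (- (m * x)) by ring. rewrite exp_Ropp.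
      pose proof (exp_pos (m * x)). field. lra.
  - apply vanishes_at_minfty_scal, vanishes_at_minfty_exp, Hm.
Qed.

Lemma wbar_eq x : wbar x = exp (a * x) * Phi x.
Proof.
  unfold Phi. rewrite <- Rmult_assoc, <- exp_plus.
  replace (a * x + - (a * x)) with 0 by ring. rewrite exp_0. ring.
Qed.

Lemma dwbar_eq x : dwbar x = a * exp (a * x) * Phi x + exp (a * x) * dPhi x.
Proof.
  unfold Phi, dPhi.
  replace (a * exp (a * x) * (exp (- (a * x)) * wbar x)
           + exp (a * x) * (exp (- (a * x)) * (dwbar x - a * wbar x)))
    with (exp (a * x + - (a * x)) * dwbar x) by (rewrite exp_plus; ring).
  replace (a * x + - (a * x)) with 0 by ring. rewrite exp_0. ring.
Qed.

End Profile.

Section Radial.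
Variables (N : nat) (p : R) (u du : R -> R -> R) (g : R).
Hypotheses (HN : (3 <= N)%nat) (Hp : pS N < p) (Hg : 0 < g)
  (Hsol : is_radial_solution N p g (u g) (du g)).

Let m := mcst N p.
Let a := m * theta p.
Let be := m * (INR N - 2).
Let k := kap N p g.

Definition zfun x := u g (k * exp (m * x)) / g.
Definition dzfun x := m * k * exp (m * x) * du g (k * exp (m * x)) / g.
Definition ddzfun x := - be * dzfun x
  - m * m * (k * exp (m * x)) * (k * exp (m * x)) * Defs.f p (u g (k * exp (m * x))) / g.

Lemma radius_derivable x : derivable_pt_lim (fun t => k * exp (m * t)) x (m * (k * exp (m * x))).
Proof.
  eapply derivable_pt_lim_eq_l.
  - exact (derivable_pt_lim_scal _ k x _ (derivable_pt_lim_exp_scal m x)).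
  - ring.
Qed.

Lemma radius_pos x : 0 < k * exp (m * x).
Proof. apply Rmult_lt_0_compat; apply exp_pos. Qed.

Lemma zfun_derivable x : derivable_pt_lim zfun x (dzfun x).
Proof.
  destruct Hsol as [_ [Hu _]].
  eapply derivable_pt_lim_eq_l.
  - exact (derivable_pt_lim_scal_right _ x _ (/ g)
      (derivable_pt_lim_comp _ (u g) x _ _ (radius_derivable x) (Hu _ (radius_pos x)))).
  - unfold dzfun. field. lra.
Qed.

Lemma dzfun_derivable x : derivable_pt_lim dzfun x (ddzfun x).
Proof.
  destruct Hsol as [_ [_ [Hdu _]]].
  pose proof (exp_pos (m * x)). pose proof (radius_pos x).
  apply (derivable_pt_lim_ext (fun t => m * k / g * exp (m * t) * du g (k * exp (m * t)))).
  { intros t. unfold dzfun. field. lra. }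
  eapply derivable_pt_lim_eq_l.
  - exact (derivable_pt_lim_mult (fun t => m * k / g * exp (m * t)) _ x _ _
      (derivable_pt_lim_scal _ (m * k / g) x _ (derivable_pt_lim_exp_scal m x))
      (derivable_pt_lim_comp _ (du g) x _ _ (radius_derivable x) (Hdu _ (radius_pos x)))).
  - unfold ddzfun, dzfun, be, comp. cbv beta. assert (0 < k) by apply exp_pos.
    field. repeat split; lra.
Qed.

Lemma zfun_ode x : 0 < zfun x ->
  ddzfun x + be * dzfun x
  = - (exp (2 * m * x) * (Rpower (zfun x) p - m * m * (k * k) * zfun x)).
Proof.
  intros Hz. pose proof (kap_scaling N p HN Hp g Hg) as Hscale. fold m k in Hscale.
  pose proof (p_gt_1 N p HN Hp).
  assert (Hu : u g (k * exp (m * x)) = g * zfun x) by (unfold zfun; field; lra).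
  assert (Hpow : Rpower (g * zfun x) p = g * Rpower g (p - 1) * Rpower (zfun x) p).
  { rewrite <- Rpower_mult_distr by lra. f_equal.
    replace p with ((p - 1) + 1) at 1 by ring. rewrite Rpower_plus, Rpower_1 by lra. ring. }
  unfold ddzfun. rewrite Hu. unfold Defs.f, rpow.
  destruct (Rlt_dec 0 (g * zfun x)) as [_|Hneg]; [|exfalso; nra].
  rewrite Hpow. replace (2 * m * x) with (m * x + m * x) by ring. rewrite exp_plus.
  replace (Rpower (zfun x) p)
    with (m * m * (k * k) * Rpower g (p - 1) * Rpower (zfun x) p) at 2 by (rewrite Hscale; ring).
  field. lra.
Qed.

Lemma zfun_vanishes : vanishes_at_minfty (fun x => zfun x - 1).
Proof.
  destruct Hsol as [_ [_ [_ [Hlim _]]]].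
  pose proof (mcst_pos N p HN Hp).
  apply (vanishes_at_minfty_ext (fun x => / g * (u g (k * exp (m * x)) - g))).
  - intros x. unfold zfun. field. lra.
  - apply vanishes_at_minfty_scal, vanishes_at_minfty_exp_comp; auto. apply exp_pos.
Qed.

Lemma dzfun_vanishes : vanishes_at_minfty (fun x => exp (- m * x) * dzfun x).
Proof.
  destruct Hsol as [_ [_ [_ [_ Hlim]]]].
  pose proof (mcst_pos N p HN Hp).
  apply (vanishes_at_minfty_ext (fun x => m * k / g * (du g (k * exp (m * x)) - 0))).
  - intros x. unfold dzfun. replace (- m * x) with (- (m * x)) by ring. rewrite exp_Ropp.
    pose proof (exp_pos (m * x)). field. lra.
  - apply vanishes_at_minfty_scal, vanishes_at_minfty_exp_comp; auto; [apply exp_pos|].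
    intros e He. destruct (Hlim e He) as [d [Hd Hdu]]. exists d. split; auto.
    intros s Hs. rewrite Rminus_0_r. auto.
Qed.

Lemma wfun_eq x : wfun N p u x g = exp (a * x) * zfun x.
Proof.
  pose proof (mcst_pos N p HN Hp) as Hm. fold m in Hm. pose proof (theta_pos N p HN Hp).
  pose proof (Acst_pos N p).
  unfold wfun, yfun, zfun. fold m a.
  assert (Hs : exp (m * (x - taufun N p g)) = k * exp (m * x)).
  { unfold k, kap. fold m. rewrite <- exp_plus. f_equal. ring. }
  assert (Hw : exp (a * (x - taufun N p g)) = exp (a * x) * / g * Acst N p).
  { unfold taufun. fold m. rewrite <- (exp_ln g Hg) at 2. rewrite <- (exp_ln (Acst N p)) at 2 by auto.
    rewrite <- exp_Ropp, <- !exp_plus. f_equal. unfold a. field. split; lra. }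
  rewrite Hs, Hw. field. lra.
Qed.

Lemma wfun_derivable x :
  derivable_pt_lim (fun t => wfun N p u t g) x (a * exp (a * x) * zfun x + exp (a * x) * dzfun x).
Proof.
  apply (derivable_pt_lim_ext (fun t => exp (a * t) * zfun t)).
  - intros t. symmetry. apply wfun_eq.
  - exact (derivable_pt_lim_mult _ zfun x _ _ (derivable_pt_lim_exp_scal a x) (zfun_derivable x)).
Qed.

End Radial.

Section Convergence.
Variables (N : nat) (p : R) (u du : R -> R -> R) (wbar dwbar : R -> R).
Hypotheses (HN : (3 <= N)%nat) (Hp : pS N < p)
  (Hsol : forall g, 0 < g -> is_radial_solution N p g (u g) (du g))
  (Hw : forall xi, derivable_pt_lim wbar xi (dwbar xi))
  (Hdw : forall xi, derivable_pt_lim dwbar xi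
                      (- alpha N p * dwbar xi + wbar xi - rpow (wbar xi) p))
  (Hwpos : forall xi, 0 < wbar xi)
  (Hwlim : forall eps, 0 < eps -> exists M, forall xi, xi < M ->
     Rabs (exp (- (mcst N p * theta p * xi)) * wbar xi - 1) < eps).

Lemma rescaled_close b eta : 0 < eta -> exists G, 0 < G /\ forall g xi, G < g -> xi <= b ->
  Rabs (zfun N p u g xi - Phi N p wbar xi) < eta /\
  Rabs (exp (- mcst N p * xi) * (dzfun N p du g xi - dPhi N p wbar dwbar xi)) < eta.
Proof.
  intros Heta. pose proof (mcst_pos N p HN Hp) as Hm. pose proof (p_gt_1 N p HN Hp).
  pose proof (INR_ge_3 N HN).
  destruct (Phi_bounds N p wbar dwbar Hw Hwpos Hwlim b) as [c [B [Hc HPhi]]].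
  destruct (perturbation_close (mcst N p) (mcst N p * (INR N - 2)) p c B b
              Hm ltac:(nra) ltac:(lra) Hc _ _ _
              (Phi_derivable N p wbar dwbar Hw)
              (dPhi_derivable N p wbar dwbar Hw Hdw)
              (Phi_ode N p wbar dwbar HN Hp Hwpos) HPhi Hwlim
              (dPhi_vanishes N p wbar dwbar HN Hp Hw Hdw Hwpos Hwlim) eta Heta)
    as [ep0 [Hep0 Hclose]].
  destruct (kap_sqr_small N p HN Hp ep0 Hep0) as [G [HG Hsmall]].
  exists G. split; [exact HG|]. intros g xi Hg Hxi.
  assert (Hg0 : 0 < g) by lra.
  apply (Hclose (mcst N p * mcst N p * (kap N p g * kap N p g)) _ _ (ddzfun N p u du g));
    auto.
  - split; [nra|auto].
  - exact (zfun_derivable N p u du g Hg0 (Hsol g Hg0)).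
  - exact (dzfun_derivable N p u du g Hg0 (Hsol g Hg0)).
  - exact (zfun_ode N p u du g HN Hp Hg0).
  - exact (zfun_vanishes N p u du g HN Hp Hg0 (Hsol g Hg0)).
  - exact (dzfun_vanishes N p u du g HN Hp Hg0 (Hsol g Hg0)).
Qed.

End Convergence.

Theorem lemma5p2 (N : nat) (p : R) (u du : R -> R -> R)
  (wbar dwbar : R -> R) :
  (3 <= N)%nat ->
  pS N < p ->
  (forall gamma, 0 < gamma -> is_radial_solution N p gamma (u gamma) (du gamma)) ->
  (forall xi, derivable_pt_lim wbar xi (dwbar xi)) ->
  (forall xi, derivable_pt_lim dwbar xi
                (- alpha N p * dwbar xi + wbar xi - rpow (wbar xi) p)) ->
  (forall xi, 0 < wbar xi) ->
  (forall eps, 0 < eps -> exists M, forall xi, xi < M ->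
     Rabs (exp (- (mcst N p * theta p * xi)) * wbar xi - 1) < eps) ->
  forall xibar eps, 0 < eps ->
  exists G, 0 < G /\ forall gamma xi, G < gamma -> xi <= xibar ->
    Rabs (wfun N p u xi gamma - wbar xi) < eps /\
    (forall d, derivable_pt_lim (fun x => wfun N p u x gamma) xi d ->
       Rabs (d - dwbar xi) < eps).
Proof.
  intros HN Hp Hsol Hw Hdw Hwpos Hwlim b eps Heps.
  pose proof (mcst_pos N p HN Hp) as Hm. pose proof (theta_pos N p HN Hp) as Hth.
  set (m := mcst N p) in *. set (a := m * theta p).
  assert (Ha : 0 < a) by (unfold a; nra).
  set (Cb := exp (a * b) * (1 + a + exp (m * b))).
  assert (HCb : 0 < Cb) by (pose proof (exp_pos (a * b)); pose proof (exp_pos (m * b));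
                            unfold Cb; nra).
  destruct (rescaled_close N p u du wbar dwbar HN Hp Hsol Hw Hdw Hwpos Hwlim b (eps / Cb))
    as [G [HG Hclose]]; [apply Rdiv_lt_0_compat; lra|].
  exists G. split; [exact HG|]. intros g xi Hg Hxi.
  assert (Hg0 : 0 < g) by lra.
  destruct (Hclose g xi Hg Hxi) as [HE HX].
  destruct (weighted_close a m b xi (eps / Cb) _ _ _ _ Ha Hm Hxi HE HX) as [Hval Hder].
  fold Cb in Hval, Hder. replace (Cb * (eps / Cb)) with eps in * by (field; lra).
  split.
  - rewrite wfun_eq, (wbar_eq N p wbar xi) by auto. exact Hval.
  - intros d Hd.
    rewrite (uniqueness_limite _ _ _ _ Hd (wfun_derivable N p u du g HN Hp Hg0 (Hsol g Hg0) xi)).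
    rewrite (dwbar_eq N p wbar dwbar xi). exact Hder.
Qed.
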